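(* Let $n\ge3$ and $x^\Lambda\partial_k\in\mathcal{B}$. If $\mathrm{lev}_i(x^\Lambda\partial_k)\le i$ for some integer $i\ge-1$, then $\mathrm{lev}_{i+(n-1)}(x^\Lambda\partial_k)\le i+(n-1)$. In particular, for every integer $h$: $\mathrm{lev}_i(x^\Lambda\partial_k)>i$ for all integers $i$ with $-1\le i\le h(n-1)$ if and only if $\mathrm{lev}_i(x^\Lambda\partial_k)>i$ for all integers $i\ge -1$ with $(h-1)(n-1)+1\le i\le h(n-1)$.
   Context: Fix an integer $n\ge 3$. A partition is a sequence $\Lambda=(\lambda_j)_{j\ge1}$ of non-negative integers with finite support; $\mathrm{wt}(\Lambda)=\sum_j j\lambda_j$; $\mathrm{Part}(k)$ is the set of partitions with $\lambda_j=0$ for $j>k$. Write $x^\Lambda=\prod_j x_j^{\lambda_j}$, $\deg(x^\Lambda)=\sum_j\lambda_j$. $\mathcal{B}=\{x^\Lambda\partial_k : 1\le k\le n,\ \Lambda\in\mathrm{Part}(k-1)\}$. For an integer $i\ge-1$, let $r_i\in\{1,\dots,n-1\}$ with $i\equiv r_i\pmod{n-1}$ and $h_i=\lfloor (i-1)/(n-1)\rfloor+1$. Define $\mathrm{WD}(x^\Lambda\partial_k)=\mathrm{wt}(\Lambda)-\deg(x^\Lambda)+n-k$ and $\mathrm{lev}_i(x^\Lambda\partial_k)=h_i\,\mathrm{WD}(x^\Lambda\partial_k)+\deg(x^\Lambda)-1$ (defined for integers $i\ge-1$). *)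

From mathcomp Require Import all_boot all_order all_algebra.
Set Implicit Arguments. Unset Strict Implicit. Unset Printing Implicit Defensive.
Import Order.TTheory GRing.Theory Num.Theory.

(* A partition Lambda = (lambda_j)_{j>=1} is represented by a finite sequence
   s : seq nat with lambda_j = nth 0 s (j-1); entries beyond size s are 0,
   so the support is automatically finite. *)
Definition lam (s : seq nat) (j : nat) : nat := nth 0%N s j.-1.

Definition inPart (k : nat) (s : seq nat) : Prop :=
  forall j : nat, (k < j)%N -> lam s j = 0%N.

Definition wt (s : seq nat) : nat := \sum_(i < size s) (i.+1 * nth 0%N s i)%N.

Definition deg (s : seq nat) : nat := sumn s.

Definition inB (n : nat) (s : seq nat) (k : nat) : Prop :=
  [/\ (1 <= k)%N, (k <= n)%N & inPart k.-1 s].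

Local Open Scope ring_scope.

Definition WD (n : nat) (s : seq nat) (k : nat) : int :=
  (wt s)%:Z - (deg s)%:Z + n%:Z - k%:Z.

Definition hh (n : nat) (i : int) : int := ((i - 1) %/ (n%:Z - 1))%Z + 1.

Definition lev (n : nat) (i : int) (s : seq nat) (k : nat) : int :=
  hh n i * WD n s k + (deg s)%:Z - 1.

(* Raising i by n - 1 raises h_i by one, so lev grows by exactly WD.  Hence it
   suffices that lev_i <= i forces WD <= n - 1.  As Lambda lives in Part(k-1),
   wt <= (k-1) deg, so WD >= n forces deg >= 2; since h_i >= 0 and
   i <= h_i (n-1), this gives lev_i >= h_i n + 1 > i.  The equivalence follows
   by walking down from the top window in steps of n - 1. *)

From mathcomp Require Import all_boot all_order all_algebra.
From mathcomp Require Import zify ring.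
Import Order.TTheory GRing.Theory Num.Theory.
Local Open Scope ring_scope.

Lemma wt_le_deg (s : seq nat) (k : nat) : inPart k s -> (wt s <= k * deg s)%N.
Proof.
move=> s_part; rewrite /wt /deg sumnE (big_nth 0%N) big_mkord big_distrr /=.
apply: leq_sum => i _; case: (ltnP k i.+1) => [lt_ki | le_ik].
  by rewrite [nth _ _ _](s_part i.+1 lt_ki) muln0.
by rewrite leq_mul2r le_ik orbT.
Qed.

Lemma downward_window (Q : int -> Prop) (lo b m : int) :
  0 < m -> (forall i, lo <= i -> Q (i + m) -> Q i) ->
  (forall i, lo <= i -> b - m < i -> i <= b -> Q i) ->
  forall i, lo <= i -> i <= b -> Q i.
Proof.
move=> m_gt0 Q_down Q_window i lo_i i_b.
have [d] : exists d : nat, b - i <= d%:Z by exists `|b - i|%N; lia.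
elim: d i lo_i i_b => [|d IHd] i lo_i i_b le_bid;
  (have [lt_bm_i | le_i_bm] := ltrP (b - m) i; first exact: Q_window).
- lia.
- by apply: Q_down => //; apply: IHd; lia.
Qed.

Section Levels.

Variable n : nat.
Hypothesis n_ge3 : (3 <= n)%N.

Lemma hh_shift (i : int) : hh n (i + (n%:Z - 1)) = hh n i + 1.
Proof.
rewrite /hh (_ : _ - 1 = 1 * (n%:Z - 1) + (i - 1)); last by ring.
by rewrite divzMDl; [ring | lia].
Qed.

Lemma hh_divz_spec (i : int) :
  exists2 r : int, i - 1 = (hh n i - 1) * (n%:Z - 1) + r & 0 <= r < n%:Z - 1.
Proof.
exists ((i - 1) %% (n%:Z - 1))%Z; first by rewrite /hh addrK -divz_eq.
by rewrite modz_ge0 ?ltz_pmod //=; lia.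
Qed.

Lemma hh_ge0 (i : int) : -1 <= i -> 0 <= hh n i.
Proof. by have [r ? ?] := hh_divz_spec i; nia. Qed.

Lemma le_hh_mul (i : int) : i <= hh n i * (n%:Z - 1).
Proof. by have [r ? ?] := hh_divz_spec i; nia. Qed.

Variables (s : seq nat) (k : nat).
Hypothesis sk_B : inB n s k.

Lemma lev_shift (i : int) :
  lev n (i + (n%:Z - 1)) s k = lev n i s k + WD n s k.
Proof. by rewrite /lev hh_shift; ring. Qed.

Lemma WD_le_of_deg_le1 : (deg s <= 1)%N -> WD n s k <= n%:Z - 1.
Proof.
case: sk_B => k_ge1 _ /wt_le_deg le_wt deg_le1; rewrite /WD.
have : (deg s = 0 \/ deg s = 1)%N by lia.
by case=> deg_eq; rewrite deg_eq in le_wt *; lia.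
Qed.

Lemma WD_le_of_lev_le (i : int) :
  -1 <= i -> lev n i s k <= i -> WD n s k <= n%:Z - 1.
Proof.
move=> i_ge lev_le; rewrite leNgt; apply/negP => WD_gtn.
have deg_ge2 : (1 < deg s)%N.
  by rewrite ltnNge; apply/negP => /WD_le_of_deg_le1; lia.
have := hh_ge0 _ i_ge; have := le_hh_mul i; move: lev_le; rewrite /lev; nia.
Qed.

Lemma lev_le_shift (i : int) : -1 <= i -> lev n i s k <= i ->
  lev n (i + (n%:Z - 1)) s k <= i + (n%:Z - 1).
Proof.
move=> i_ge lev_le; rewrite lev_shift lerD //.
exact: WD_le_of_lev_le i_ge lev_le.
Qed.

End Levels.

Theorem lemma2p6 (n : nat) (s : seq nat) (k : nat) :
  (3 <= n)%N -> inB n s k ->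
  (forall i : int, -1 <= i -> lev n i s k <= i ->
      lev n (i + (n%:Z - 1)) s k <= i + (n%:Z - 1))
  /\
  (forall h : int,
     (forall i : int, -1 <= i -> i <= h * (n%:Z - 1) -> lev n i s k > i)
     <->
     (forall i : int, -1 <= i -> (h - 1) * (n%:Z - 1) + 1 <= i ->
         i <= h * (n%:Z - 1) -> lev n i s k > i)).
Proof.
move=> n_ge3 sk_B; split=> [|h]; first exact: lev_le_shift.
split=> [lev_gt i i_ge _ | lev_gt_window]; first exact: lev_gt.
apply: (@downward_window (fun i => i < lev n i s k) (-1) (h * (n%:Z - 1))
  (n%:Z - 1)); first lia.
  move=> i i_ge; rewrite !ltNge; apply: contra.
  exact: lev_le_shift.
move=> i i_ge i_gt i_le; apply: lev_gt_window => //; lia.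
Qed.
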